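(* Let $(T,\mathsf{T})$ be a measurable space, $(X,d)$ a complete separable metric space, and let $f:T\to X$ and $\rho:T\to[0,\infty)$ be measurable. Let $\phi:X\times X\to[0,\infty)$ be a Carath\'eodory distance. Then the set-valued map $t\mapsto\overline{B}^\phi_{\rho(t)}(f(t))$ is graph measurable.
   Context: A Carath\'eodory distance is a function $\phi:X\times X\to[0,\infty)$ continuous in its left argument and Borel measurable in its right argument. $\overline{B}^\phi_r(x):=\{y\in X\mid\phi(y,x)\le r\}$. A set-valued map $\varphi:T\to2^X$ is graph measurable if $\{(t,x)\mid x\in\varphi(t)\}\in\mathsf{T}\otimes\mathsf{B}(X)$. *)

From HB Require Import structures.
From mathcomp Require Import all_boot all_order all_algebra.
From mathcomp Require Import all_classical all_reals all_analysis.
Set Implicit Arguments. Unset Strict Implicit. Unset Printing Implicit Defensive.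
Import Order.TTheory GRing.Theory Num.Theory.
Import numFieldTopology.Exports.
Local Open Scope classical_set_scope.
Local Open Scope ring_scope.

Definition borel_set (X : topologicalType) : set (set X) := <<s @open X >>.

Definition borel_measurable_fun (d : measure_display) (T : measurableType d)
  (X : topologicalType) (f : T -> X) : Prop :=
  forall B : set X, borel_set B -> measurable (f @^-1` B).

Definition prod_borel_measurable (d : measure_display) (T : measurableType d)
  (X : topologicalType) : set (set (T * X)) :=
  <<s [set C | exists A B, [/\ measurable A, borel_set B & C = A `*` B]] >>.

Definition cball_phi (X : Type) (R : realType) (phi : X -> X -> R) (r : R) (x : X)
  : set X := [set y | phi y x <= r].

Definition caratheodory_distance (R : realType) (X : topologicalType)
  (phi : X -> X -> R) : Prop :=
  [/\ (forall x y, 0 <= phi x y),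
      (forall y, continuous (fun x => phi x y)) &
      (forall x (B : set R), measurable B -> borel_set (phi x @^-1` B))].

Definition graph_measurable (d : measure_display) (T : measurableType d)
  (X : topologicalType) (Phi : T -> set X) : Prop :=
  prod_borel_measurable [set tx : T * X | Phi tx.1 tx.2].

From HB Require Import structures.
From mathcomp Require Import all_boot all_order all_algebra.
From mathcomp Require Import all_classical all_reals all_analysis.
From mathcomp Require Import lra.
Import Order.TTheory GRing.Theory Num.Theory.
Import numFieldTopology.Exports.
Local Open Scope classical_set_scope.
Local Open Scope ring_scope.

(** Fix a dense sequence [(e m)] in [X].  Since [phi] is continuous in its
    left argument, [phi x (f t) <= rho t] holds iff for every [n] some [e m]
    lies within [1/(n+1)] of [x] and satisfies
    [phi (e m) (f t) < rho t + 1/(n+1)].  This writes the graph as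
    [\bigcap_n \bigcup_m A_nm `*` B_nm] with [A_nm] measurable, because
    [t |-> phi (e m) (f t)] is, and [B_nm] open. *)

Lemma countable_dense_range {X : topologicalType} (x0 : X) {D : set X} :
  countable D -> dense D -> exists e : nat -> X, dense (range e).
Proof.
move=> /countable_injP[g ginj] denseD; exists ('pinv_(fun=> x0) D g).
move=> O O0 openO; have [q [Oq Dq]] := denseD O O0 openO.
by exists q; split => //; exists (g q); rewrite // pinvKV ?inE.
Qed.

Lemma exists_natSinv_lt {R : archiRealFieldType} (c : R) :
  0 < c -> exists n : nat, n.+1%:R^-1 < c.
Proof.
move=> c0; have [N _ ltN] := near_infty_natSinv_lt (PosNum c0).
by exists N; apply: ltN => /=.
Qed.

Section sublevel_dense_sequence.
Context {R : realType} {X : pseudoMetricType R}.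
Context {psi : X -> R} {e : nat -> X}.
Hypotheses (psi_cont : continuous psi) (e_dense : dense (range e)).

(** Balls of a pseudometric need not be open, hence the interiors. *)
Lemma le_dense_seqP (x : X) (r : R) :
  psi x <= r <->
  forall n : nat, exists m : nat,
    psi (e m) < r + n.+1%:R^-1 /\ (ball (e m) n.+1%:R^-1)° x.
Proof.
have open_sublevel c : open [set z | psi z < c].
  exact: (continuousP psi).1 psi_cont _ (@open_lt R c).
split=> [psi_le n | near_le].
- set eps : R := n.+1%:R^-1.
  have eps2_gt0 : 0 < eps / 2 by rewrite divr_gt0 // invr_gt0 ltr0n.
  pose O := [set z | psi z < r + eps] `&` (ball x (eps / 2))°.
  have Ox : O x.
    split; last exact: nbhsx_ballx.
    by rewrite /=; lra.
  have [y [[psi_lt xm] [m _ em_y]]] :=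
    e_dense O (ex_intro _ x Ox) (openI (open_sublevel _) (@open_interior _ _)).
  subst y; exists m; split => //.
  apply: filterS (nbhsx_ballx x (eps / 2) eps2_gt0) => z xz.
  rewrite (splitr eps).
  exact: ball_triangle (ball_sym (interior_subset xm)) xz.
- rewrite leNgt; apply/negP => r_lt.
  set eps := (psi x - r) / 2.
  have eps_gt0 : 0 < eps by rewrite divr_gt0 // subr_gt0.
  have : nbhs x [set z | r + eps < psi z].
    apply: open_nbhs_nbhs; split; last by rewrite /= /eps; lra.
    exact: (continuousP psi).1 psi_cont _ (@open_gt R _).
  move=> /nbhs_ballP[de /= de_gt0 ball_sub].
  have [n] : exists n : nat, n.+1%:R^-1 < Num.min de eps.
    by apply: exists_natSinv_lt; rewrite lt_min de_gt0 eps_gt0.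
  rewrite lt_min => /andP[n_lt_de n_lt_eps].
  have [m [psi_lt xm]] := near_le n.
  have /ball_sub /= psi_gt :=
    le_ball (ltW n_lt_de) (ball_sym (interior_subset xm)).
  have : psi (e m) < r + eps by rewrite (lt_trans psi_lt) // ltrD2l.
  by rewrite ltNge (ltW psi_gt).
Qed.

End sublevel_dense_sequence.

Lemma measurable_ltr_set {d} {T : measurableType d} {R : realType}
    (g h : T -> R) :
  measurable_fun setT g -> measurable_fun setT h ->
  measurable [set t | g t < h t].
Proof.
move=> mg mh; have := measurable_realfun.measurable_fun_ltr mg mh measurableT.
by move=> /(_ [set true] I); rewrite setTI.
Qed.

Lemma borel_measurableT_comp {d} {T : measurableType d} {X : topologicalType}
    {R : realType} {f : T -> X} {h : X -> R} :
  borel_measurable_fun f ->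
  (forall B : set R, measurable B -> borel_set (h @^-1` B)) ->
  measurable_fun setT (h \o f).
Proof. by move=> mf mh _ B mB; rewrite setTI; exact: mf _ (mh _ mB). Qed.

Lemma prod_borel_measurable_bigcap_bigcup {d} {T : measurableType d}
    {X : topologicalType} (A : nat -> nat -> set T) (B : nat -> nat -> set X) :
  (forall n m, measurable (A n m)) -> (forall n m, open (B n m)) ->
  prod_borel_measurable (\bigcap_n \bigcup_m (A n m `*` B n m)).
Proof.
move=> mA oB; rewrite -[Z in prod_borel_measurable Z]setCK setC_bigcap -setTD.
apply: sigma_algebraCD; apply: sigma_algebra_bigcup => n.
rewrite -setTD; apply: sigma_algebraCD; apply: sigma_algebra_bigcup => m.
apply: sub_sigma_algebra; exists (A n m), (B n m); split => //.
exact: sub_sigma_algebra.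
Qed.

Theorem lemma2p9 (R : realType) (d : measure_display) (T : measurableType d)
  (X : metricType R)
  (X_complete : forall F : set_system X, ProperFilter F -> cauchy F -> exists x : X, F --> x)
  (X_separable : exists D : set X, countable D /\ dense D)
  (f : T -> X) (rho : T -> R) (phi : X -> X -> R)
  (f_meas : borel_measurable_fun f)
  (rho_meas : measurable_fun setT rho) (rho_ge0 : forall t, 0 <= rho t)
  (phi_car : caratheodory_distance phi) :
  graph_measurable (fun t : T => cball_phi phi (rho t) (f t)).
Proof.
rewrite /graph_measurable; case: phi_car => _ phi_cont phi_meas.
have [[x0 _]|X0] := pselect (exists x : X, True); last first.
  have -> : [set tx : T * X | cball_phi phi (rho tx.1) (f tx.1) tx.2] = set0.
    by apply/seteqP; split => -[t x] //= _; case: X0; exists x.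
  exact: sigma_algebra0.
have [D [countD denseD]] := X_separable.
have [e e_dense] := countable_dense_range x0 countD denseD.
pose A n m := [set t | phi (e m) (f t) < rho t + n.+1%:R^-1].
pose B n m := (ball (e m) n.+1%:R^-1)°.
have -> : [set tx : T * X | cball_phi phi (rho tx.1) (f tx.1) tx.2] =
    \bigcap_n \bigcup_m (A n m `*` B n m).
  apply/seteqP; split => -[t x] /=.
  - move=> /(le_dense_seqP (phi_cont (f t)) e_dense) near_le n _.
    by have [m ?] := near_le n; exists m.
  - move=> near_le; apply/(le_dense_seqP (phi_cont (f t)) e_dense) => n.
    by have [m _ ?] := near_le n I; exists m.
apply: prod_borel_measurable_bigcap_bigcup => n m; last exact: open_interior.
apply: measurable_ltr_set.
  exact: borel_measurableT_comp f_meas (phi_meas _).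
by apply: measurable_realfun.measurable_funD => //; exact: measurable_cst.
Qed.
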